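(* Every Cantor space $(X,d)$ has the property*.
   Context: A Cantor space is a compact metric space $(X,d)$ with no isolated points that is totally disconnected (equivalently, of topological dimension zero). $\mathcal{H}(X)$ denotes the set of homeomorphisms of $X$. For continuous maps $f,g:X\to X$ let $d_{C^0}(f,g)=\sup_{x\in X}d(f(x),g(x))$, and for $f,g\in\mathcal{H}(X)$ let $D(f,g)=\max\{d_{C^0}(f,g),d_{C^0}(f^{-1},g^{-1})\}$. An $n$-tuple $(x_1,\dots,x_n)\in X^n$ is proper if $x_i\neq x_j$ for all $1\le i<j\le n$. On $X^n$ use $d_n(\zeta,\eta)=\max_{1\le i\le n}d(x_i,y_i)$ for $\zeta=(x_1,\dots,x_n)$, $\eta=(y_1,\dots,y_n)$, and for a map $\phi$ write $\phi^{(n)}(\zeta)=(\phi(x_1),\dots,\phi(x_n))$. A compact metric space $(X,d)$ has the property* if for every $\epsilon>0$ there is $\delta>0$ such that for every integer $n\ge1$ and every pair of proper $n$-tuples $\zeta,\eta\in X^n$ with $d_n(\zeta,\eta)<\delta$, there exists $\phi\in\mathcal{H}(X)$ with $D(\phi,\mathrm{id}_X)<\epsilon$ and $\phi^{(n)}(\zeta)=\eta$. *)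

From Stdlib Require Import Reals List.
Open Scope R_scope.

Definition is_metric {X : Type} (d : X -> X -> R) : Prop :=
  (forall x y, 0 <= d x y) /\
  (forall x y, d x y = 0 <-> x = y) /\
  (forall x y, d x y = d y x) /\
  (forall x y z, d x z <= d x y + d y z).

Definition is_open {X : Type} (d : X -> X -> R) (U : X -> Prop) : Prop :=
  forall x, U x -> exists r, 0 < r /\ forall y, d x y < r -> U y.

Definition is_compact {X : Type} (d : X -> X -> R) : Prop :=
  forall (I : Type) (U : I -> X -> Prop),
    (forall i, is_open d (U i)) ->
    (forall x, exists i, U i x) ->
    exists l : list I, forall x, exists i, In i l /\ U i x.

Definition no_isolated_points {X : Type} (d : X -> X -> R) : Prop :=
  forall x eps, 0 < eps -> exists y, y <> x /\ d x y < eps.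

Definition is_connected_subset {X : Type} (d : X -> X -> R) (A : X -> Prop) : Prop :=
  forall U V : X -> Prop, is_open d U -> is_open d V ->
    (forall x, A x -> U x \/ V x) ->
    (forall x, A x -> U x -> V x -> False) ->
    (forall x, A x -> U x) \/ (forall x, A x -> V x).

Definition totally_disconnected {X : Type} (d : X -> X -> R) : Prop :=
  forall A : X -> Prop, is_connected_subset d A ->
    forall x y, A x -> A y -> x = y.

Definition is_cantor_space {X : Type} (d : X -> X -> R) : Prop :=
  is_metric d /\ is_compact d /\ no_isolated_points d /\ totally_disconnected d.

Definition continuous_map {X : Type} (d : X -> X -> R) (f : X -> X) : Prop :=
  forall x eps, 0 < eps -> exists delta, 0 < delta /\
    forall y, d x y < delta -> d (f x) (f y) < eps.

Definition is_homeo {X : Type} (d : X -> X -> R) (phi psi : X -> X) : Prop :=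
  continuous_map d phi /\ continuous_map d psi /\
  (forall x, psi (phi x) = x) /\ (forall x, phi (psi x) = x).

(* D(phi, id) < eps, i.e. max(sup_x d(phi x, x), sup_x d(phi^-1 x, x)) < eps *)
Definition D_id_lt {X : Type} (d : X -> X -> R) (phi psi : X -> X) (eps : R) : Prop :=
  exists c, c < eps /\ forall x, d (phi x) x <= c /\ d (psi x) x <= c.

(* n-tuples are functions nat -> X, only indices i < n matter *)
Definition proper_tuple {X : Type} (n : nat) (z : nat -> X) : Prop :=
  forall i j, (i < n)%nat -> (j < n)%nat -> i <> j -> z i <> z j.

Definition dn_lt {X : Type} (d : X -> X -> R) (n : nat) (z w : nat -> X) (delta : R) : Prop :=
  forall i, (i < n)%nat -> d (z i) (w i) < delta.

Definition property_star {X : Type} (d : X -> X -> R) : Prop :=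
  forall eps, 0 < eps -> exists delta, 0 < delta /\
    forall (n : nat) (z w : nat -> X), (1 <= n)%nat ->
      proper_tuple n z -> proper_tuple n w -> dn_lt d n z w delta ->
      exists phi psi : X -> X, is_homeo d phi psi /\ D_id_lt d phi psi eps /\
        forall i, (i < n)%nat -> phi (z i) = w i.

(* Cut X into finitely many clopen pieces of diameter < eps/2.  By compactness there is a Lebesgue
   number delta: points closer than delta lie in the same piece, so delta-close proper tuples z, w
   have z_i and w_i in the same piece for every i.  It then suffices to move z_i to w_i one index at a
   time by piece-preserving homeomorphisms, which displace no point by eps/2 or more.  Each move is an
   involution exchanging two small disjoint clopen neighbourhoods of the current image of z_i and of
   w_i, chosen inside one piece and away from the points already placed.

   The exchange rests on the fact that two nonempty clopen sets U, V are homeomorphic by a map sending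
   a given a in U to a given b in V.  Refine U and V simultaneously: at depth n every matched pair of
   pieces is cut into the same number of clopen pieces of diameter < 1/(n+1), the pieces containing a
   and b getting the same label (equal numbers are reached by splitting pieces, possible as there are
   no isolated points).  A point of U is sent to the unique point of V with the same address.
   Clopen pieces of small diameter exist because, in a compact space, the quasi-component of a point
   is connected, hence a singleton. *)
From Stdlib Require Import Reals Lra Lia List Classical ClassicalEpsilon.
Open Scope R_scope.

Definition mesh (n : nat) : R := / INR (S n).

Lemma mesh_pos n : 0 < mesh n.
Proof. apply Rinv_0_lt_compat, lt_0_INR; lia. Qed.

Lemma mesh_lt e : 0 < e -> exists n, mesh n < e.
Proof.
  intros He. destruct (archimed_cor1 e He) as [N [HN HNpos]]. exists (pred N).
  unfold mesh. replace (S (pred N)) with N by lia. exact HN.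
Qed.

Lemma pos_lower_bound_nat (n : nat) (f : nat -> R) : (forall i, (i < n)%nat -> 0 < f i) ->
  exists r, 0 < r /\ forall i, (i < n)%nat -> r <= f i.
Proof.
  induction n as [| n IH]; intros H.
  - exists 1; split; [lra | intros; lia].
  - destruct IH as [r [Hr Hb]]; [intros i Hi; apply H; lia |].
    exists (Rmin r (f n)). split; [apply Rmin_pos; auto |].
    intros i Hi. destruct (Nat.eq_dec i n) as [-> | Hin]; [apply Rmin_r |].
    pose proof (Rmin_l r (f n)). pose proof (Hb i ltac:(lia)). lra.
Qed.

Lemma pos_lower_bound_list {A : Type} (l : list A) (f : A -> R) : (forall x, 0 < f x) ->
  exists r, 0 < r /\ forall x, In x l -> r <= f x.
Proof.
  intros H. induction l as [| a l IH].
  - exists 1; split; [lra | intros x []].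
  - destruct IH as [r [Hr Hb]]. exists (Rmin r (f a)). split; [apply Rmin_pos; auto |].
    intros x [<- | Hx]; [apply Rmin_r |]. pose proof (Rmin_l r (f a)). pose proof (Hb x Hx). lra.
Qed.

Section CantorSpace.

Variable X : Type.
Variable d : X -> X -> R.
Hypothesis d_metric : is_metric d.

Lemma d_nonneg x y : 0 <= d x y.
Proof. apply d_metric. Qed.

Lemma d_refl x : d x x = 0.
Proof. apply (proj1 (proj2 d_metric)); reflexivity. Qed.

Lemma d_eq0 x y : d x y = 0 -> x = y.
Proof. apply (proj1 (proj2 d_metric)). Qed.

Lemma d_sym x y : d x y = d y x.
Proof. apply d_metric. Qed.

Lemma d_triangle x y z : d x z <= d x y + d y z.
Proof. apply d_metric. Qed.

Lemma d_pos x y : x <> y -> 0 < d x y.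
Proof.
  intros Hxy. destruct (d_nonneg x y) as [Hlt | Heq]; [exact Hlt |].
  exfalso; apply Hxy, d_eq0; auto.
Qed.

Definition clopen (C : X -> Prop) := is_open d C /\ is_open d (fun y => ~ C y).

Definition small (C : X -> Prop) (r : R) := forall x y, C x -> C y -> d x y < r.

Lemma open_ball x r : is_open d (fun y => d x y < r).
Proof.
  intros y Hy. exists (r - d x y). split; [lra |].
  intros z Hz. pose proof (d_triangle x y z). lra.
Qed.

Lemma open_ext (P Q : X -> Prop) : (forall y, P y <-> Q y) -> is_open d P -> is_open d Q.
Proof.
  intros E HP x Qx. destruct (HP x (proj2 (E x) Qx)) as [r [Hr Hball]].
  exists r; split; auto. intros y Hy; apply E; auto.
Qed.

Lemma open_True : is_open d (fun _ => True).
Proof. intros x _; exists 1; split; auto; lra. Qed.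

Lemma open_False : is_open d (fun _ => False).
Proof. intros x []. Qed.

Lemma open_and P Q : is_open d P -> is_open d Q -> is_open d (fun y => P y /\ Q y).
Proof.
  intros HP HQ x [Px Qx].
  destruct (HP x Px) as [r1 [Hr1 H1]]. destruct (HQ x Qx) as [r2 [Hr2 H2]].
  exists (Rmin r1 r2); split; [apply Rmin_pos; auto |].
  intros y Hy. pose proof (Rmin_l r1 r2). pose proof (Rmin_r r1 r2).
  split; [apply H1 | apply H2]; lra.
Qed.

Lemma open_or P Q : is_open d P -> is_open d Q -> is_open d (fun y => P y \/ Q y).
Proof.
  intros HP HQ x [Px | Qx].
  - destruct (HP x Px) as [r [Hr H]]. exists r; split; auto.
  - destruct (HQ x Qx) as [r [Hr H]]. exists r; split; auto.
Qed.

Lemma clopen_ext (P Q : X -> Prop) : (forall y, P y <-> Q y) -> clopen P -> clopen Q.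
Proof.
  intros E [HP HnP]; split.
  - exact (open_ext P Q E HP).
  - apply (open_ext _ _ (fun y => not_iff_compat (E y)) HnP).
Qed.

Lemma clopen_True : clopen (fun _ => True).
Proof. split; [apply open_True | eapply open_ext; [| apply open_False]; simpl; tauto]. Qed.

Lemma clopen_False : clopen (fun _ => False).
Proof. split; [apply open_False | eapply open_ext; [| apply open_True]; simpl; tauto]. Qed.

Lemma clopen_and P Q : clopen P -> clopen Q -> clopen (fun y => P y /\ Q y).
Proof.
  intros [HP HnP] [HQ HnQ]; split; [apply open_and; auto |].
  eapply open_ext; [| apply (open_or _ _ HnP HnQ)]. intro y; simpl; tauto.
Qed.

Lemma clopen_or P Q : clopen P -> clopen Q -> clopen (fun y => P y \/ Q y).
Proof.
  intros [HP HnP] [HQ HnQ]; split; [apply open_or; auto |].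
  eapply open_ext; [| apply (open_and _ _ HnP HnQ)]. intro y; simpl; tauto.
Qed.

Lemma clopen_impl (Q : Prop) P : clopen P -> clopen (fun y => Q -> P y).
Proof.
  intros HP. destruct (classic Q) as [q | nq].
  - eapply clopen_ext; [| exact HP]. intro; simpl; tauto.
  - eapply clopen_ext; [| apply clopen_True]. intro; simpl; tauto.
Qed.

Lemma clopen_all_in {A : Type} (l : list A) (P : A -> X -> Prop) :
  (forall o, In o l -> clopen (P o)) -> clopen (fun y => forall o, In o l -> P o y).
Proof.
  induction l as [| o l IH]; intros HP.
  - eapply clopen_ext; [| apply clopen_True]. intro y; simpl; tauto.
  - eapply clopen_ext; [| apply (clopen_and _ _ (HP o (in_eq o l)) (IH (fun o' H => HP o' (in_cons o o' l H))))].
    intro y; simpl. split; [intros [H1 H2] o' [<- | Ho']; auto | intros H; split; auto].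
Qed.

Lemma clopen_ex_in {A : Type} (l : list A) (P : A -> X -> Prop) :
  (forall o, In o l -> clopen (P o)) -> clopen (fun y => exists o, In o l /\ P o y).
Proof.
  induction l as [| o l IH]; intros HP.
  - eapply clopen_ext; [| apply clopen_False]. intro y; simpl. split; [tauto | intros [o [[] _]]].
  - eapply clopen_ext; [| apply (clopen_or _ _ (HP o (in_eq o l)) (IH (fun o' H => HP o' (in_cons o o' l H))))].
    intro y; simpl. split.
    + intros [Hy | [o' [Ho' Hy]]]; eauto.
    + intros [o' [[<- | Ho'] Hy]]; eauto.
Qed.

Lemma separate_disjoint_closed (A B : X -> Prop) :
  is_open d (fun z => ~ A z) -> is_open d (fun z => ~ B z) -> (forall z, A z -> B z -> False) ->
  exists U V, is_open d U /\ is_open d V /\ (forall z, A z -> U z) /\ (forall z, B z -> V z) /\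
    (forall z, U z -> V z -> False).
Proof.
  intros HA HB Hdisj.
  assert (HrA : forall a, exists r, 0 < r /\ (A a -> forall y, d a y < r -> ~ B y)).
  { intro a. destruct (classic (A a)) as [Aa | nAa].
    - destruct (HB a (fun Ba => Hdisj a Aa Ba)) as [r [Hr H]]. exists r; auto.
    - exists 1; split; [lra | tauto]. }
  assert (HrB : forall b, exists r, 0 < r /\ (B b -> forall y, d b y < r -> ~ A y)).
  { intro b. destruct (classic (B b)) as [Bb | nBb].
    - destruct (HA b (fun Ab => Hdisj b Ab Bb)) as [r [Hr H]]. exists r; auto.
    - exists 1; split; [lra | tauto]. }
  apply choice in HrA as [ra Hra]. apply choice in HrB as [rb Hrb].
  exists (fun y => exists a, A a /\ d a y < ra a / 2), (fun y => exists b, B b /\ d b y < rb b / 2).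
  split; [| split; [| split; [| split]]].
  - intros y [a [Aa Hy]]. exists (ra a / 2 - d a y). split; [lra |].
    intros z Hz. exists a; split; auto. pose proof (d_triangle a y z). lra.
  - intros y [b [Bb Hy]]. exists (rb b / 2 - d b y). split; [lra |].
    intros z Hz. exists b; split; auto. pose proof (d_triangle b y z). lra.
  - intros z Az. exists z; split; auto. rewrite d_refl. pose proof (proj1 (Hra z)); lra.
  - intros z Bz. exists z; split; auto. rewrite d_refl. pose proof (proj1 (Hrb z)); lra.
  - intros z [a [Aa Haz]] [b [Bb Hbz]].
    pose proof (d_triangle a z b). rewrite (d_sym b z) in Hbz.
    destruct (Rle_dec (rb b) (ra a)).
    + apply (proj2 (Hra a) Aa b); auto. lra.
    + apply (proj2 (Hrb b) Bb a); auto. rewrite d_sym. lra.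
Qed.

Lemma clopen_locally_decided C x : clopen C ->
  exists e, 0 < e /\ forall y, d x y < e -> (C y <-> C x).
Proof.
  intros [HC HnC]. destruct (classic (C x)) as [Cx | nCx].
  - destruct (HC x Cx) as [e [He Hball]]. exists e; split; auto. intros y Hy; split; auto.
  - destruct (HnC x nCx) as [e [He Hball]]. exists e; split; auto.
    intros y Hy; split; intro H; [exfalso; exact (Hball y Hy H) | contradiction].
Qed.

Lemma clopen_and_open_part (C P Q : X -> Prop) : clopen C -> is_open d P -> is_open d Q ->
  (forall z, C z -> P z \/ Q z) -> (forall z, P z -> Q z -> False) ->
  clopen (fun z => C z /\ P z).
Proof.
  intros [HC HnC] HP HQ Hcov Hdisj. split; [apply open_and; auto |].
  intros z Hz. destruct (classic (C z)) as [Cz | nCz].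
  - assert (Qz : Q z) by (destruct (Hcov z Cz); tauto).
    destruct (HQ z Qz) as [r [Hr Hball]]. exists r; split; auto.
    intros y Hy [_ Py]. exact (Hdisj y Py (Hball y Hy)).
  - destruct (HnC z nCz) as [r [Hr Hball]]. exists r; split; auto.
    intros y Hy [Cy _]. exact (Hball y Hy Cy).
Qed.

Hypothesis d_compact : is_compact d.

Lemma clopen_nbhd_within x (W : X -> Prop) : is_open d W ->
  (forall z, ~ W z -> exists C, clopen C /\ C x /\ ~ C z) ->
  exists C, clopen C /\ C x /\ forall y, C y -> W y.
Proof.
  intros HW Hsep.
  assert (HCz : forall z, exists C, clopen C /\ (~ W z -> C x /\ ~ C z)).
  { intro z. destruct (classic (W z)) as [Wz | nWz].
    - exists (fun _ => True). split; [apply clopen_True | tauto].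
    - destruct (Hsep z nWz) as [C HC]. exists C; tauto. }
  apply choice in HCz as [Cz HCz].
  set (cover := fun (o : option X) y => match o with None => W y | Some z => ~ W z /\ ~ Cz z y end).
  destruct (d_compact (option X) cover) as [l Hl].
  - intros [z |]; simpl; auto.
    destruct (classic (W z)) as [Wz | nWz].
    + eapply open_ext; [| apply open_False]. intro; simpl; tauto.
    + eapply open_ext; [| apply (proj2 (proj1 (HCz z)))]. intro; simpl; tauto.
  - intro y. destruct (classic (W y)) as [Wy | nWy].
    + exists None; simpl; auto.
    + exists (Some y); simpl. split; auto. apply (proj2 (HCz y) nWy).
  - exists (fun y => forall o, In o l -> match o with None => True | Some z => ~ W z -> Cz z y end).
    split; [| split].
    + apply clopen_all_in. intros [z |] _; [apply clopen_impl, HCz | apply clopen_True].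
    + intros [z |] _; auto. intro nWz. apply (proj2 (HCz z) nWz).
    + intros y Hy. destruct (Hl y) as [o [Ho Hcov]]. specialize (Hy o Ho).
      destruct o as [z |]; simpl in *; auto. destruct Hcov as [nWz nCy]. tauto.
Qed.

Lemma nested_closed_inter (F : nat -> X -> Prop) :
  (forall n, is_open d (fun z => ~ F n z)) -> (forall n z, F (S n) z -> F n z) ->
  (forall n, exists z, F n z) -> exists z, forall n, F n z.
Proof.
  intros Hclosed Hdecr Hne. apply NNPP; intro Hempty.
  assert (Hmono : forall n m, (n <= m)%nat -> forall z, F m z -> F n z).
  { intros n m Hnm. induction Hnm; auto. }
  destruct (d_compact nat (fun n z => ~ F n z)) as [l Hl]; auto.
  - intro z. apply NNPP; intro H. apply Hempty. exists z. intro n. apply NNPP; intro. apply H; eauto.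
  - set (M := fold_right max 0%nat l).
    assert (HM : forall n, In n l -> (n <= M)%nat).
    { unfold M; clear. induction l as [| a l IH]; simpl; [tauto |].
      intros n [<- | Hn]; [lia | specialize (IH n Hn); lia]. }
    destruct (Hne M) as [z Hz]. destruct (Hl z) as [n [Hn nFz]].
    exact (nFz (Hmono n M (HM n Hn) z Hz)).
Qed.

Definition quasi_component x z := forall C, clopen C -> C x -> C z.

Lemma not_quasi_component x z : ~ quasi_component x z -> exists C, clopen C /\ C x /\ ~ C z.
Proof.
  intros Hz. apply NNPP; intro Hno. apply Hz. intros C HC Cx.
  apply NNPP; intro nCz. apply Hno. exists C; auto.
Qed.

Lemma quasi_component_closed x : is_open d (fun z => ~ quasi_component x z).
Proof.
  intros z Hz. destruct (not_quasi_component x z Hz) as [C [HC [Cx nCz]]].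
  destruct (proj2 HC z nCz) as [r [Hr Hball]]. exists r; split; auto.
  intros y Hy Qy. exact (Hball y Hy (Qy C HC Cx)).
Qed.

(* [Q /\ ~V] and [Q /\ ~U] are disjoint closed sets; a clopen neighbourhood of [x] inside disjoint
   open neighbourhoods [U'], [V'] of them splits into two clopen parts, and [Q] lies in the part
   containing [x]. *)
Lemma quasi_component_connected x : is_connected_subset d (quasi_component x).
Proof.
  intros U V HU HV Hcov Hdisj.
  set (Q := quasi_component x) in *.
  assert (Hclosed : forall P : X -> Prop, is_open d P -> is_open d (fun z => ~ (Q z /\ ~ P z))).
  { intros P HP. eapply open_ext; [| apply (open_or _ _ (quasi_component_closed x) HP)].
    intro z; simpl. tauto. }
  destruct (separate_disjoint_closed (fun z => Q z /\ ~ V z) (fun z => Q z /\ ~ U z))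
    as [U' [V' [HU' [HV' [HQU' [HQV' Hdisj']]]]]];
    [apply Hclosed; auto | apply Hclosed; auto | intros z [Qz nVz] [_ nUz]; destruct (Hcov z Qz); tauto |].
  assert (HQ : forall z, Q z -> U' z \/ V' z).
  { intros z Qz. destruct (classic (U z)) as [Uz | nUz].
    - left. apply HQU'. split; auto. intro Vz. exact (Hdisj z Qz Uz Vz).
    - right. apply HQV'. split; auto. }
  destruct (clopen_nbhd_within x (fun z => U' z \/ V' z)) as [C [HC [Cx HCUV]]];
    [apply open_or; auto | intros z Hz; apply not_quasi_component; intro Qz; exact (Hz (HQ z Qz)) |].
  destruct (classic (U' x)) as [U'x | nU'x].
  - left. intros q Qq.
    destruct (Qq _ (clopen_and_open_part C U' V' HC HU' HV' HCUV Hdisj') (conj Cx U'x)) as [_ U'q].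
    destruct (classic (U q)) as [Uq | nUq]; auto.
    exfalso. exact (Hdisj' q U'q (HQV' q (conj Qq nUq))).
  - right. intros q Qq.
    assert (V'x : V' x) by (destruct (HCUV x Cx); tauto).
    assert (HC' : clopen (fun z => C z /\ V' z)).
    { apply (clopen_and_open_part C V' U'); auto.
      - intros z Cz. destruct (HCUV z Cz); tauto.
      - intros z V'z U'z. exact (Hdisj' z U'z V'z). }
    destruct (Qq _ HC' (conj Cx V'x)) as [_ V'q].
    destruct (classic (V q)) as [Vq | nVq]; auto.
    exfalso. exact (Hdisj' q (HQU' q (conj Qq nVq)) V'q).
Qed.

Hypothesis d_totally_disconnected : totally_disconnected d.

Lemma clopen_separation x y : x <> y -> exists C, clopen C /\ C x /\ ~ C y.
Proof.
  intros Hxy. apply not_quasi_component. intro Qy. apply Hxy.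
  apply (d_totally_disconnected _ (quasi_component_connected x)); auto.
  intros C _ Cx; exact Cx.
Qed.

Lemma clopen_nbhd_small x r : 0 < r -> exists C, clopen C /\ C x /\ small C r.
Proof.
  intros Hr. destruct (clopen_nbhd_within x (fun y => d x y < r / 2)) as [C [HC [Cx HCr]]].
  - apply open_ball.
  - intros z Hz. apply clopen_separation. intros ->. apply Hz. rewrite d_refl. lra.
  - exists C; split; [| split]; auto. intros y z Cy Cz.
    pose proof (HCr y Cy). pose proof (HCr z Cz). pose proof (d_triangle y x z).
    rewrite (d_sym y x) in *. lra.
Qed.

(* A partition of [A] into [k] nonempty pieces of diameter [< r], encoded by the labelling [c]. *)
Definition partition (A : X -> Prop) (c : X -> nat) (k : nat) (r : R) :=
  (forall x, A x -> (c x < k)%nat) /\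
  (forall j, (j < k)%nat -> exists x, A x /\ c x = j) /\
  (forall x, A x -> exists e, 0 < e /\ forall y, d x y < e -> A y /\ c y = c x) /\
  (forall x y, A x -> A y -> c x = c y -> d x y < r).

Lemma partition_ext A B c k r : (forall y, A y <-> B y) -> partition A c k r -> partition B c k r.
Proof.
  intros E [Hlt [Hsurj [Hloc Hsmall]]]. split; [| split; [| split]].
  - intros x Bx; apply Hlt, E, Bx.
  - intros j Hj. destruct (Hsurj j Hj) as [x [Ax Hx]]. exists x; split; auto; apply E; auto.
  - intros x Bx. destruct (Hloc x (proj2 (E x) Bx)) as [e [He Hball]]. exists e; split; auto.
    intros y Hy. destruct (Hball y Hy); split; auto. apply E; auto.
  - intros x y Bx By. apply Hsmall; apply E; auto.
Qed.

Lemma partition_piece_clopen A c k r j : partition A c k r -> clopen A ->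
  clopen (fun x => A x /\ c x = j).
Proof.
  intros [_ [_ [Hloc _]]] [_ HnA]. split.
  - intros x [Ax cx]. destruct (Hloc x Ax) as [e [He Hball]]. exists e; split; auto.
    intros y Hy. destruct (Hball y Hy); split; auto. congruence.
  - intros x Hx. destruct (classic (A x)) as [Ax | nAx].
    + destruct (Hloc x Ax) as [e [He Hball]]. exists e; split; auto.
      intros y Hy [Ay cy]. destruct (Hball y Hy). apply Hx. split; auto. congruence.
    + destruct (HnA x nAx) as [e [He Hball]]. exists e; split; auto.
      intros y Hy [Ay _]. exact (Hball y Hy Ay).
Qed.

Lemma partition_union A T c k r : partition A c k r -> clopen A -> is_open d T -> small T r ->
  exists k' c', partition (fun y => A y \/ T y) c' k' r.
Proof.
  intros [Hlt [Hsurj [Hloc Hsmall]]] HA HT HTr.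
  destruct (classic (exists y, T y /\ ~ A y)) as [[y0 [Ty0 nAy0]] | Hno].
  - set (c' := fun y => if excluded_middle_informative (A y) then c y else k).
    assert (c'A : forall y, A y -> c' y = c y).
    { intros y Ay. unfold c'. destruct (excluded_middle_informative (A y)); tauto. }
    assert (c'T : forall y, ~ A y -> c' y = k).
    { intros y nAy. unfold c'. destruct (excluded_middle_informative (A y)); tauto. }
    exists (S k), c'. split; [| split; [| split]].
    + intros x Hx. destruct (classic (A x)) as [Ax | nAx].
      * rewrite c'A; auto. specialize (Hlt x Ax); lia.
      * rewrite c'T; auto.
    + intros j Hj. destruct (Nat.eq_dec j k) as [-> | Hjk].
      * exists y0. split; auto.
      * destruct (Hsurj j ltac:(lia)) as [x [Ax Hx]]. exists x. split; auto. rewrite c'A; auto.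
    + intros x Hx. destruct (classic (A x)) as [Ax | nAx].
      * destruct (Hloc x Ax) as [e [He Hball]]. exists e; split; auto. intros y Hy.
        destruct (Hball y Hy) as [Ay Hcy]. split; auto. rewrite !c'A; auto.
      * assert (Tx : T x) by tauto.
        destruct (open_and T _ HT (proj2 HA) x (conj Tx nAx)) as [e [He Hball]].
        exists e; split; auto. intros y Hy. destruct (Hball y Hy) as [Ty nAy].
        split; auto. rewrite !c'T; auto.
    + intros x y Hx Hy.
      destruct (classic (A x)) as [Ax | nAx]; destruct (classic (A y)) as [Ay | nAy];
        [rewrite !c'A; auto | rewrite c'A, c'T; auto | rewrite c'T, c'A; auto | intros _];
        [intros E; pose proof (Hlt x Ax); lia | intros E; pose proof (Hlt y Ay); lia |].
      apply HTr; tauto.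
  - exists k, c. apply (partition_ext A); [| split; auto].
    intro y. split; [tauto |]. intros [Ay | Ty]; auto. apply NNPP; intro nAy. apply Hno; eauto.
Qed.

Lemma partition_of_clopen_cover (Cs : list (X -> Prop)) r :
  (forall C, In C Cs -> clopen C /\ small C r) ->
  exists k c, partition (fun y => exists C, In C Cs /\ C y) c k r.
Proof.
  induction Cs as [| C Cs IH]; intros HCs.
  - exists 0%nat, (fun _ => 0%nat). split; [| split; [| split]].
    + intros x [C [[] _]].
    + intros j Hj; lia.
    + intros x [C [[] _]].
    + intros x y [C [[] _]].
  - destruct IH as [k [c Hpart]]; [intros C' HC'; apply HCs, in_cons, HC' |].
    destruct (HCs C (in_eq C Cs)) as [HC HCr].
    destruct (partition_union _ C c k r Hpart) as [k' [c' Hpart']]; auto;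
      [apply clopen_ex_in; intros C' HC'; apply HCs, in_cons, HC' | apply HC |].
    exists k', c'. revert Hpart'. apply partition_ext. intro y; simpl. split.
    + intros [[C' [HC' Hy]] | Hy]; eauto.
    + intros [C' [[<- | HC'] Hy]]; eauto.
Qed.

Lemma partition_exists A r : clopen A -> 0 < r -> exists k c, partition A c k r.
Proof.
  intros HA Hr.
  assert (HCx : forall x, exists C, clopen C /\ C x /\ small C r) by (intro x; apply clopen_nbhd_small, Hr).
  apply choice in HCx as [Cx HCx].
  destruct (d_compact (option X) (fun o y => match o with None => ~ A y | Some x => Cx x y end)) as [l Hl].
  - intros [x |]; [apply HCx | apply HA].
  - intro y. destruct (classic (A y)); [exists (Some y); apply HCx | exists None; auto].
  - set (Cs := map (fun o y => match o with None => False | Some x => A y /\ Cx x y end) l).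
    destruct (partition_of_clopen_cover Cs r) as [k [c Hpart]].
    + intros C HC. unfold Cs in HC. apply in_map_iff in HC as [[x |] [<- _]].
      * split; [apply clopen_and; [apply HA | apply HCx] |].
        intros y z [_ Hy] [_ Hz]. exact (proj2 (proj2 (HCx x)) y z Hy Hz).
      * split; [apply clopen_False | intros y z []].
    + exists k, c. revert Hpart. apply partition_ext. intro y. split.
      * intros [C [HC Hy]]. apply in_map_iff in HC as [[x |] [<- _]]; simpl in Hy; tauto.
      * intro Ay. destruct (Hl y) as [[x |] [Ho Hy]]; [| exfalso; exact (Hy Ay)].
        exists (fun y => A y /\ Cx x y). split; auto. apply in_map_iff. exists (Some x); auto.
Qed.

Hypothesis d_perfect : no_isolated_points d.

Lemma partition_split_piece A c k r : partition A c k r -> (1 <= k)%nat ->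
  exists c', partition A c' (S k) r.
Proof.
  intros [Hlt [Hsurj [Hloc Hsmall]]] Hk.
  destruct (Hsurj 0%nat Hk) as [x0 [Ax0 cx0]].
  destruct (Hloc x0 Ax0) as [e [He Hball]].
  destruct (d_perfect x0 e He) as [y0 [Hy0x0 Hdy0]].
  destruct (Hball y0 Hdy0) as [Ay0 cy0].
  destruct (clopen_separation x0 y0) as [C [HC [Cx0 nCy0]]]; [auto |].
  set (c' := fun y => if excluded_middle_informative (C y /\ c y = 0%nat) then k else c y).
  assert (c'_in : forall y, C y -> c y = 0%nat -> c' y = k).
  { intros y Cy Hy. unfold c'. destruct (excluded_middle_informative _); tauto. }
  assert (c'_out : forall y, ~ (C y /\ c y = 0%nat) -> c' y = c y).
  { intros y Hy. unfold c'. destruct (excluded_middle_informative _); tauto. }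
  exists c'. split; [| split; [| split]].
  - intros x Ax. destruct (classic (C x /\ c x = 0%nat)) as [[Cx Hx] | Hx];
      [rewrite c'_in | rewrite c'_out; [specialize (Hlt x Ax); lia |]]; auto.
  - intros j Hj. destruct (Nat.eq_dec j k) as [-> | Hjk].
    + exists x0. split; auto.
    + destruct (Nat.eq_dec j 0) as [-> | Hj0].
      * exists y0. split; auto. rewrite c'_out; [congruence | tauto].
      * destruct (Hsurj j ltac:(lia)) as [x [Ax Hx]]. exists x. split; auto.
        rewrite c'_out; [auto | lia].
  - intros x Ax. destruct (Hloc x Ax) as [e1 [He1 Hb1]]. destruct (clopen_locally_decided C x HC) as [e2 [He2 Hb2]].
    exists (Rmin e1 e2). split; [apply Rmin_pos; auto |].
    intros y Hy. pose proof (Rmin_l e1 e2). pose proof (Rmin_r e1 e2).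
    destruct (Hb1 y ltac:(lra)) as [Ay cy]. specialize (Hb2 y ltac:(lra)). split; auto.
    unfold c'. rewrite cy.
    destruct (excluded_middle_informative (C y /\ c x = 0%nat));
      destruct (excluded_middle_informative (C x /\ c x = 0%nat)); tauto.
  - intros x y Ax Ay. pose proof (Hlt x Ax). pose proof (Hlt y Ay).
    destruct (classic (C x /\ c x = 0%nat)) as [[Cx Hx] | Hx];
      destruct (classic (C y /\ c y = 0%nat)) as [[Cy Hy] | Hy].
    + intros _. apply Hsmall; auto. congruence.
    + rewrite c'_in, c'_out; auto. lia.
    + rewrite c'_out, c'_in; auto. lia.
    + rewrite !c'_out; auto.
Qed.

Lemma partition_more_pieces A c k r : partition A c k r -> (1 <= k)%nat ->
  forall m, (k <= m)%nat -> exists c', partition A c' m r.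
Proof.
  intros Hpart Hk m Hkm. induction Hkm as [| m Hkm [c' Hc']]; eauto.
  apply (partition_split_piece A c'); auto. lia.
Qed.

Definition swap_label (i j n : nat) : nat :=
  if Nat.eq_dec n i then j else if Nat.eq_dec n j then i else n.

Lemma swap_labelK i j n : swap_label i j (swap_label i j n) = n.
Proof. unfold swap_label. repeat (destruct Nat.eq_dec; subst; try lia; auto). Qed.

Lemma swap_label_lt i j n k : (i < k)%nat -> (j < k)%nat -> (n < k)%nat -> (swap_label i j n < k)%nat.
Proof. unfold swap_label. repeat destruct Nat.eq_dec; lia. Qed.

Lemma partition_relabel A c k r p : partition A c k r -> A p ->
  exists c', partition A c' k r /\ c' p = 0%nat.
Proof.
  intros [Hlt [Hsurj [Hloc Hsmall]]] Ap. pose proof (Hlt p Ap).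
  exists (fun y => swap_label 0 (c p) (c y)). split; [split; [| split; [| split]] |].
  - intros x Ax. apply swap_label_lt; auto; lia.
  - intros j Hj. destruct (Hsurj (swap_label 0 (c p) j)) as [x [Ax Hx]]; [apply swap_label_lt; auto; lia |].
    exists x; split; auto. rewrite Hx. apply swap_labelK.
  - intros x Ax. destruct (Hloc x Ax) as [e [He Hball]]. exists e; split; auto.
    intros y Hy. destruct (Hball y Hy) as [Ay E]. rewrite E; auto.
  - intros x y Ax Ay E. apply Hsmall; auto.
    rewrite <- (swap_labelK 0 (c p) (c x)), E. apply swap_labelK.
  - unfold swap_label. repeat destruct Nat.eq_dec; lia.
Qed.

Lemma partition_pair (A B : X -> Prop) a b r : clopen A -> clopen B -> 0 < r ->
  (exists x, A x) -> (exists y, B y) -> (A a <-> B b) ->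
  exists k cA cB, partition A cA k r /\ partition B cB k r /\ (A a -> cA a = 0%nat /\ cB b = 0%nat).
Proof.
  intros HA HB Hr [x Ax] [y By] Hab.
  destruct (partition_exists A r HA Hr) as [kA [cA HpA]].
  destruct (partition_exists B r HB Hr) as [kB [cB HpB]].
  assert (HkA : (1 <= kA)%nat) by (pose proof (proj1 HpA x Ax); lia).
  assert (HkB : (1 <= kB)%nat) by (pose proof (proj1 HpB y By); lia).
  destruct (partition_more_pieces A cA kA r HpA HkA (max kA kB)) as [cA' HpA']; [lia |].
  destruct (partition_more_pieces B cB kB r HpB HkB (max kA kB)) as [cB' HpB']; [lia |].
  destruct (classic (A a)) as [Aa | nAa].
  - destruct (partition_relabel A cA' _ r a HpA' Aa) as [cA'' [HpA'' Ha]].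
    destruct (partition_relabel B cB' _ r b HpB' (proj1 Hab Aa)) as [cB'' [HpB'' Hb]].
    exists (max kA kB), cA'', cB''. auto.
  - exists (max kA kB), cA', cB'. split; [| split]; tauto.
Qed.

Section ClopenHomeomorphism.

Variables U V : X -> Prop.
Variables a b : X.
Hypothesis U_clopen : clopen U.
Hypothesis V_clopen : clopen V.
Hypothesis Ua : U a.
Hypothesis Vb : V b.

(* Both halves of the construction are handled at once: side [true] lives in [U], side [false] in [V]. *)
Definition side {T : Type} (s : bool) (p : T * T) : T := if s then fst p else snd p.

Definition base_point (s : bool) : X := if s then a else b.

Definition matched_partition (A B : X -> Prop) (n : nat) : (X -> nat) * (X -> nat) :=
  epsilon (inhabits (fun _ => 0%nat, fun _ => 0%nat))
    (fun p => exists k, partition A (fst p) k (mesh n) /\ partition B (snd p) k (mesh n) /\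
                        (A a -> fst p a = 0%nat /\ snd p b = 0%nat)).

(* The pair of corresponding pieces of [U] and [V] with address [l]; the head of [l] is the
   label chosen at the deepest level. *)
Fixpoint node (l : list nat) : (X -> Prop) * (X -> Prop) :=
  match l with
  | nil => (U, V)
  | j :: l' =>
      let p := node l' in
      let c := matched_partition (fst p) (snd p) (length l') in
      ((fun x => fst p x /\ fst c x = j), (fun y => snd p y /\ snd c y = j))
  end.

Definition node_labels (l : list nat) := matched_partition (fst (node l)) (snd (node l)) (length l).

Lemma node_cons s j l x : side s (node (j :: l)) x <-> side s (node l) x /\ side s (node_labels l) x = j.
Proof. destruct s; simpl; tauto. Qed.

Definition node_invariant (l : list nat) :=
  (forall s, clopen (side s (node l))) /\
  ((exists x, fst (node l) x) <-> (exists y, snd (node l) y)) /\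
  (forall s, side s (node l) (base_point s) <-> side true (node l) a).

Lemma node_labels_spec l : node_invariant l -> (exists x, fst (node l) x) ->
  exists k, (forall s, partition (side s (node l)) (side s (node_labels l)) k (mesh (length l))) /\
            (fst (node l) a -> forall s, side s (node_labels l) (base_point s) = 0%nat).
Proof.
  intros [Hclopen [Hne Hbase]] Hx.
  assert (Hex : exists p : (X -> nat) * (X -> nat), exists k,
      partition (fst (node l)) (fst p) k (mesh (length l)) /\
      partition (snd (node l)) (snd p) k (mesh (length l)) /\
      (fst (node l) a -> fst p a = 0%nat /\ snd p b = 0%nat)).
  { destruct (partition_pair (fst (node l)) (snd (node l)) a b (mesh (length l)))
      as [k [cA [cB H]]].
    - exact (Hclopen true).
    - exact (Hclopen false).
    - apply mesh_pos.
    - exact Hx.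
    - exact (proj1 Hne Hx).
    - symmetry. exact (Hbase false).
    - exists (cA, cB), k. exact H. }
  destruct (epsilon_spec (inhabits (fun _ : X => 0%nat, fun _ : X => 0%nat)) _ Hex) as [k [HpA [HpB Hab]]].
  exists k. unfold node_labels, matched_partition. split.
  - intros []; assumption.
  - intros Ha []; simpl; apply Hab; auto.
Qed.

Lemma node_invariant_cons j l : node_invariant l -> node_invariant (j :: l).
Proof.
  intros Hinv. destruct (classic (exists x, fst (node l) x)) as [Hx | Hnx].
  - destruct (node_labels_spec l Hinv Hx) as [k [Hpart Hzero]].
    destruct Hinv as [Hclopen [Hne Hbase]].
    assert (Hpiece : forall s, (j < k)%nat -> exists x, side s (node (j :: l)) x).
    { intros s Hjk. destruct (proj1 (proj2 (Hpart s)) j Hjk) as [y [Hy cy]].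
      exists y. apply node_cons. auto. }
    assert (Hnopiece : forall s x, (k <= j)%nat -> ~ side s (node (j :: l)) x).
    { intros s x Hkj Hx'. apply node_cons in Hx' as [Ax cx].
      pose proof (proj1 (Hpart s) x Ax). lia. }
    split; [| split].
    + intro s. eapply clopen_ext; [intro y; symmetry; apply node_cons |].
      exact (partition_piece_clopen _ _ _ _ j (Hpart s) (Hclopen s)).
    + destruct (Nat.lt_ge_cases j k) as [Hjk | Hkj].
      * split; intros _; [apply (Hpiece false) | apply (Hpiece true)]; auto.
      * split; intros [x Hx']; exfalso; [apply (Hnopiece true x) | apply (Hnopiece false x)]; auto.
    + intro s. rewrite !node_cons, (Hbase s).
      destruct (classic (side true (node l) a)) as [Ha | nHa]; [| tauto].
      pose proof (Hzero Ha s) as E1. pose proof (Hzero Ha true) as E2. simpl in E2.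
      simpl. rewrite E1, E2. tauto.
  - assert (Hny : ~ exists y, snd (node l) y) by (destruct Hinv as [_ [Hne _]]; tauto).
    assert (Hempty : forall s x, ~ side s (node (j :: l)) x).
    { intros s x Hx'. apply node_cons in Hx'.
      destruct s; simpl in Hx'; [apply Hnx | apply Hny]; exists x; tauto. }
    split; [| split].
    + intro s. eapply clopen_ext; [| apply clopen_False]. intro y. split; [tauto | apply Hempty].
    + split; intros [x Hx']; exfalso; [apply (Hempty true x) | apply (Hempty false x)]; auto.
    + intro s. split; intro H; exfalso; [apply (Hempty s (base_point s)) | apply (Hempty true a)]; auto.
Qed.

Lemma node_invariant_all l : node_invariant l.
Proof.
  induction l as [| j l IH]; [| apply node_invariant_cons, IH].
  split; [| split].
  - intros []; assumption.
  - split; intros _; eauto.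
  - intros []; simpl; tauto.
Qed.

Lemma node_small s j l x y :
  side s (node (j :: l)) x -> side s (node (j :: l)) y -> d x y < mesh (length l).
Proof.
  intros Hx Hy. apply node_cons in Hx as [Ax cx]. apply node_cons in Hy as [Ay cy].
  assert (Hne : exists x, fst (node l) x).
  { destruct s; [exists x; exact Ax |]. apply (node_invariant_all l). exists x; exact Ax. }
  destruct (node_labels_spec l (node_invariant_all l) Hne) as [k [Hpart _]].
  apply (proj2 (proj2 (proj2 (Hpart s)))); auto. congruence.
Qed.

Lemma node_root s l x : side s (node l) x -> side s (node nil) x.
Proof. induction l as [| j l IH]; auto. intro H. apply node_cons in H. apply IH; tauto. Qed.

Fixpoint address (s : bool) (x : X) (n : nat) : list nat :=
  match n with
  | O => nil
  | S n => side s (node_labels (address s x n)) x :: address s x n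
  end.

Lemma address_length s x n : length (address s x n) = n.
Proof. induction n; simpl; auto. Qed.

Lemma address_node s x : side s (node nil) x -> forall n, side s (node (address s x n)) x.
Proof. intros Hx n. induction n; auto. simpl address. apply node_cons. auto. Qed.

Lemma address_of_node s l x : side s (node l) x -> address s x (length l) = l.
Proof.
  induction l as [| j l IH]; auto. intro H. apply node_cons in H as [H1 H2].
  simpl. rewrite (IH H1). congruence.
Qed.

Lemma address_unique_point s x x1 x2 :
  (forall n, side s (node (address s x n)) x1) -> (forall n, side s (node (address s x n)) x2) -> x1 = x2.
Proof.
  intros H1 H2. apply d_eq0. destruct (d_nonneg x1 x2) as [Hlt |]; auto.
  destruct (mesh_lt _ Hlt) as [n Hn]. exfalso.
  pose proof (node_small s _ _ x1 x2 (H1 (S n)) (H2 (S n))) as Hsmall.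
  rewrite address_length in Hsmall. lra.
Qed.

Definition tree_map (s : bool) (x : X) : X :=
  epsilon (inhabits x) (fun y => forall n, side (negb s) (node (address s x n)) y).

Lemma tree_map_spec s x : side s (node nil) x -> forall n, side (negb s) (node (address s x n)) (tree_map s x).
Proof.
  intros Hroot. unfold tree_map. apply epsilon_spec.
  apply (nested_closed_inter (fun n => side (negb s) (node (address s x n)))).
  - intro n. exact (proj2 (proj1 (node_invariant_all (address s x n)) (negb s))).
  - intros n z Hz. simpl address in Hz. apply node_cons in Hz; tauto.
  - intro n. pose proof (address_node s x Hroot n) as Hx.
    destruct (node_invariant_all (address s x n)) as [_ [Hne _]].
    destruct s; simpl in *; apply Hne; exists x; exact Hx.
Qed.

Lemma tree_map_root s x : side s (node nil) x -> side (negb s) (node nil) (tree_map s x).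
Proof. intro H. exact (tree_map_spec s x H 0). Qed.

Lemma address_tree_map s x : side s (node nil) x -> forall n, address (negb s) (tree_map s x) n = address s x n.
Proof.
  intros Hx n. pose proof (address_of_node (negb s) (address s x n) (tree_map s x) (tree_map_spec s x Hx n)) as E.
  rewrite address_length in E. exact E.
Qed.

Lemma tree_mapK s x : side s (node nil) x -> tree_map (negb s) (tree_map s x) = x.
Proof.
  intro H. pose proof (tree_map_spec (negb s) (tree_map s x) (tree_map_root s x H)) as H1.
  rewrite Bool.negb_involutive in H1.
  apply (address_unique_point s x); [| apply address_node; auto].
  intro n. rewrite <- (address_tree_map s x H n). apply H1.
Qed.

Lemma base_point_root s : side s (node nil) (base_point s).
Proof. destruct s; simpl; auto. Qed.

Lemma tree_map_base_point s : tree_map s (base_point s) = base_point (negb s).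
Proof.
  assert (Hin : forall n, side (negb s) (node (address s (base_point s) n)) (base_point (negb s))).
  { intro n. pose proof (address_node s (base_point s) (base_point_root s) n) as Hs.
    destruct (node_invariant_all (address s (base_point s) n)) as [_ [_ Hbase]].
    apply Hbase. apply Hbase in Hs. exact Hs. }
  assert (Haddr : forall n, address (negb s) (base_point (negb s)) n = address s (base_point s) n).
  { intro n. pose proof (address_of_node _ _ _ (Hin n)) as E. rewrite address_length in E. exact E. }
  apply (address_unique_point (negb s) (base_point (negb s))).
  - intro n. rewrite Haddr. apply tree_map_spec, base_point_root.
  - intro n. rewrite Haddr. apply Hin.
Qed.

Lemma tree_map_continuous s x : side s (node nil) x -> forall e, 0 < e -> exists de, 0 < de /\
  forall y, d x y < de -> side s (node nil) y /\ d (tree_map s x) (tree_map s y) < e.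
Proof.
  intros Hx e He. destruct (mesh_lt e He) as [n Hn].
  set (l := address s x (S n)).
  destruct (proj1 (node_invariant_all l) s) as [Hopen _].
  destruct (Hopen x (address_node s x Hx (S n))) as [de [Hde Hball]].
  exists de; split; auto. intros y Hy. specialize (Hball y Hy).
  split; [eapply node_root; eauto |].
  assert (E : address s y (S n) = l).
  { pose proof (address_of_node s l y Hball) as E. unfold l in *. rewrite address_length in E. exact E. }
  pose proof (tree_map_spec s x Hx (S n)) as F1.
  pose proof (tree_map_spec s y (node_root _ _ _ Hball) (S n)) as F2.
  rewrite E in F2. fold l in F1. unfold l in F1, F2. simpl address in F1, F2.
  pose proof (node_small _ _ _ _ _ F1 F2) as Hsmall. rewrite address_length in Hsmall. lra.
Qed.

Lemma clopen_homeomorphism : exists f g : X -> X,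
  (forall x, U x -> V (f x)) /\ (forall y, V y -> U (g y)) /\
  (forall x, U x -> g (f x) = x) /\ (forall y, V y -> f (g y) = y) /\ f a = b /\
  (forall x, U x -> forall e, 0 < e -> exists de, 0 < de /\ forall y, d x y < de -> U y /\ d (f x) (f y) < e) /\
  (forall y, V y -> forall e, 0 < e -> exists de, 0 < de /\ forall z, d y z < de -> V z /\ d (g y) (g z) < e).
Proof.
  exists (tree_map true), (tree_map false).
  split; [| split; [| split; [| split; [| split; [| split]]]]].
  - exact (tree_map_root true).
  - exact (tree_map_root false).
  - exact (tree_mapK true).
  - exact (tree_mapK false).
  - exact (tree_map_base_point true).
  - exact (tree_map_continuous true).
  - exact (tree_map_continuous false).
Qed.

End ClopenHomeomorphism.

Lemma continuous_id : continuous_map d (fun x => x).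
Proof. intros x e He. exists e; split; auto. Qed.

Lemma continuous_comp f g : continuous_map d f -> continuous_map d g -> continuous_map d (fun x => g (f x)).
Proof.
  intros Hf Hg x e He. destruct (Hg (f x) e He) as [e1 [He1 H1]].
  destruct (Hf x e1 He1) as [e2 [He2 H2]]. exists e2; split; auto.
Qed.

Lemma clopen_swap (U V : X -> Prop) a b : clopen U -> clopen V -> U a -> V b ->
  (forall y, U y -> V y -> False) ->
  exists h, is_homeo d h h /\ h a = b /\ (forall x, U x -> V (h x)) /\ (forall x, V x -> U (h x)) /\
    (forall x, ~ U x -> ~ V x -> h x = x).
Proof.
  intros HU HV Ua Vb Hdisj.
  destruct (clopen_homeomorphism U V a b HU HV Ua Vb)
    as [f [g [HfV [HgU [Hgf [Hfg [Hfa [Hfc Hgc]]]]]]]].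
  set (h := fun x => if excluded_middle_informative (U x) then f x
                     else if excluded_middle_informative (V x) then g x else x).
  assert (hU : forall x, U x -> h x = f x).
  { intros x Ux. unfold h. destruct (excluded_middle_informative (U x)); tauto. }
  assert (hV : forall x, V x -> h x = g x).
  { intros x Vx. unfold h. destruct (excluded_middle_informative (U x)); [exfalso; eauto |].
    destruct (excluded_middle_informative (V x)); tauto. }
  assert (hO : forall x, ~ U x -> ~ V x -> h x = x).
  { intros x nU nV. unfold h. destruct (excluded_middle_informative (U x)); [tauto |].
    destruct (excluded_middle_informative (V x)); tauto. }
  assert (hh : forall x, h (h x) = x).
  { intro x. destruct (classic (U x)) as [Ux | nUx]; [| destruct (classic (V x)) as [Vx | nVx]].
    - rewrite (hU x Ux), hV; auto.
    - rewrite (hV x Vx), hU; auto.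
    - rewrite !(hO x nUx nVx); reflexivity. }
  assert (hcont : continuous_map d h).
  { intros x e He. destruct (classic (U x)) as [Ux | nUx]; [| destruct (classic (V x)) as [Vx | nVx]].
    - destruct (Hfc x Ux e He) as [de [Hde Hb]]. exists de; split; auto.
      intros y Hy. destruct (Hb y Hy). rewrite !hU; auto.
    - destruct (Hgc x Vx e He) as [de [Hde Hb]]. exists de; split; auto.
      intros y Hy. destruct (Hb y Hy). rewrite !hV; auto.
    - destruct (proj2 HU x nUx) as [e1 [He1 H1]]. destruct (proj2 HV x nVx) as [e2 [He2 H2]].
      exists (Rmin e (Rmin e1 e2)). split; [repeat apply Rmin_pos; auto |].
      pose proof (Rmin_l e (Rmin e1 e2)). pose proof (Rmin_r e (Rmin e1 e2)).
      pose proof (Rmin_l e1 e2). pose proof (Rmin_r e1 e2).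
      intros y Hy. rewrite !hO; auto; [lra | |]; [apply H1 | apply H2]; lra. }
  exists h. split; [repeat split; auto |]. split; [rewrite hU; auto |].
  split; [| split; auto].
  - intros x Ux. rewrite hU; auto.
  - intros x Vx. rewrite hV; auto.
Qed.

Section Labelling.

Variable c : X -> nat.
Hypothesis c_locally_constant : forall x, exists e, 0 < e /\ forall y, d x y < e -> c y = c x.

Lemma label_preserving_swap a b n (w : nat -> X) : a <> b -> c a = c b ->
  (forall i, (i < n)%nat -> w i <> a /\ w i <> b) ->
  exists h, is_homeo d h h /\ (forall x, c (h x) = c x) /\ h a = b /\
    forall i, (i < n)%nat -> h (w i) = w i.
Proof.
  intros Hab Hcab Hw.
  destruct (pos_lower_bound_nat n (fun i => Rmin (d a (w i)) (d b (w i)))) as [r0 [Hr0 Hb0]].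
  { intros i Hi. destruct (Hw i Hi). apply Rmin_pos; apply d_pos; auto. }
  destruct (c_locally_constant a) as [ea [Hea Hca]].
  destruct (c_locally_constant b) as [eb [Heb Hcb]].
  pose proof (d_pos a b Hab) as Hdab.
  set (r := Rmin (Rmin r0 (d a b / 2)) (Rmin ea eb)).
  assert (Hr : 0 < r) by (unfold r; repeat apply Rmin_pos; lra).
  assert (Hr_le : r <= r0 /\ r <= d a b / 2 /\ r <= ea /\ r <= eb).
  { unfold r. pose proof (Rmin_l (Rmin r0 (d a b / 2)) (Rmin ea eb)).
    pose proof (Rmin_r (Rmin r0 (d a b / 2)) (Rmin ea eb)).
    pose proof (Rmin_l r0 (d a b / 2)). pose proof (Rmin_r r0 (d a b / 2)).
    pose proof (Rmin_l ea eb). pose proof (Rmin_r ea eb). lra. }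
  destruct (clopen_nbhd_small a r Hr) as [U [HU [Ua HUr]]].
  destruct (clopen_nbhd_small b r Hr) as [V [HV [Vb HVr]]].
  assert (Hdisj : forall y, U y -> V y -> False).
  { intros y Uy Vy. pose proof (HUr a y Ua Uy). pose proof (HVr b y Vb Vy).
    pose proof (d_triangle a y b). rewrite (d_sym y b) in *. lra. }
  assert (HcU : forall y, U y -> c y = c a).
  { intros y Uy. apply Hca. pose proof (HUr a y Ua Uy). lra. }
  assert (HcV : forall y, V y -> c y = c a).
  { intros y Vy. rewrite Hcab. apply Hcb. pose proof (HVr b y Vb Vy). lra. }
  assert (HwUV : forall i, (i < n)%nat -> ~ U (w i) /\ ~ V (w i)).
  { intros i Hi. pose proof (Hb0 i Hi). pose proof (Rmin_l (d a (w i)) (d b (w i))).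
    pose proof (Rmin_r (d a (w i)) (d b (w i))). split; intro H'.
    - pose proof (HUr a _ Ua H'). lra.
    - pose proof (HVr b _ Vb H'). lra. }
  destruct (clopen_swap U V a b HU HV Ua Vb Hdisj) as [h [Hh [Hha [HhU [HhV Hhout]]]]].
  exists h. split; [exact Hh | split; [| split; [exact Hha |]]].
  - intro x. destruct (classic (U x)) as [Ux | nUx]; [| destruct (classic (V x)) as [Vx | nVx]].
    + rewrite (HcV (h x)), (HcU x); auto.
    + rewrite (HcU (h x)), (HcV x); auto.
    + rewrite Hhout; auto.
  - intros i Hi. destruct (HwUV i Hi). apply Hhout; auto.
Qed.

Lemma label_preserving_homeo n (z w : nat -> X) : proper_tuple n z -> proper_tuple n w ->
  (forall i, (i < n)%nat -> c (z i) = c (w i)) ->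
  exists phi psi, is_homeo d phi psi /\ (forall x, c (phi x) = c x) /\ (forall x, c (psi x) = c x) /\
    forall i, (i < n)%nat -> phi (z i) = w i.
Proof.
  induction n as [| n IH]; intros Hz Hw Hzw.
  - exists (fun x => x), (fun x => x).
    split; [repeat split; auto; apply continuous_id | repeat split; auto; intros; lia].
  - destruct IH as [phi [psi [[Hphi [Hpsi [Hpsiphi Hphipsi]]] [Hcphi [Hcpsi Hphiz]]]]].
    + intros i j Hi Hj; apply Hz; lia.
    + intros i j Hi Hj; apply Hw; lia.
    + intros i Hi; apply Hzw; lia.
    + destruct (classic (phi (z n) = w n)) as [E | NE].
      * exists phi, psi. split; [repeat split; auto | split; [| split]]; auto.
        intros i Hi. destruct (Nat.eq_dec i n) as [-> | Hin]; auto. apply Hphiz; lia.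
      * destruct (label_preserving_swap (phi (z n)) (w n) n w NE) as [h [[Hh [_ [Hhh _]]] [Hch [Hha Hhw]]]].
        { rewrite Hcphi. apply Hzw; lia. }
        { intros i Hi. split.
          - rewrite <- (Hphiz i Hi). intro E. apply (Hz i n); try lia.
            rewrite <- (Hpsiphi (z i)), <- (Hpsiphi (z n)), E. reflexivity.
          - apply Hw; lia. }
        exists (fun x => h (phi x)), (fun x => psi (h x)).
        split; [repeat split; try apply continuous_comp; auto |].
        -- intro x. rewrite Hhh. auto.
        -- intro x. rewrite Hphipsi. auto.
        -- split; [intro x; rewrite Hch; auto | split; [intro x; rewrite Hcpsi; auto |]].
           intros i Hi. destruct (Nat.eq_dec i n) as [-> | Hin]; auto.
           rewrite Hphiz; [| lia]. apply Hhw; lia.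
Qed.

Lemma locally_constant_uniform : exists eta, 0 < eta /\ forall x y, d x y < eta -> c x = c y.
Proof.
  destruct (choice _ c_locally_constant) as [e He].
  destruct (d_compact X (fun x y => d x y < e x / 2)) as [l Hl].
  - intro x. apply open_ball.
  - intro x. exists x. rewrite d_refl. pose proof (proj1 (He x)). lra.
  - destruct (pos_lower_bound_list l (fun x => e x / 2)) as [eta [Heta Hle]].
    { intro x. pose proof (proj1 (He x)). lra. }
    exists eta. split; auto. intros y z Hyz.
    destruct (Hl y) as [x [Hx Hxy]]. pose proof (Hle x Hx). pose proof (d_triangle x y z).
    destruct (He x) as [_ Hcx]. rewrite (Hcx y), (Hcx z); [reflexivity | lra | lra].
Qed.

End Labelling.

Lemma cantor_property_star : property_star d.
Proof.
  intros eps Heps.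
  destruct (partition_exists (fun _ => True) (eps / 2) clopen_True ltac:(lra))
    as [k [c [_ [_ [Hloc Hsmall]]]]].
  assert (Hc : forall x, exists e, 0 < e /\ forall y, d x y < e -> c y = c x).
  { intro x. destruct (Hloc x I) as [e [He Hb]]. exists e; split; auto. intros y Hy; apply Hb; auto. }
  destruct (locally_constant_uniform c Hc) as [eta [Heta Heta_c]].
  exists eta. split; auto. intros n z w _ Hz Hw Hzw.
  destruct (label_preserving_homeo c Hc n z w Hz Hw) as [phi [psi [Hh [Hcphi [Hcpsi Hphiz]]]]];
    [intros i Hi; apply Heta_c, Hzw, Hi |].
  exists phi, psi. split; [exact Hh | split; [| exact Hphiz]].
  exists (eps / 2). split; [lra |]. intro x. split; left; apply Hsmall; auto.
Qed.

End CantorSpace.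

Theorem lemma1p1 (X : Type) (d : X -> X -> R) :
  is_cantor_space d -> property_star d.
Proof.
  intros [Hmetric [Hcompact [Hperfect Hdisconnected]]].
  exact (cantor_property_star X d Hmetric Hcompact Hdisconnected Hperfect).
Qed.
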